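(* Let $a>1$. Then $S_n$, $S_n^+$, $B_1$, $G_4$, $H_4$ has the maximum value of $SEI_a$ among all $n$-vertex trees, unicyclic graphs, bicyclic graphs, tricyclic graphs and tetracyclic graphs, respectively.
   Context: All graphs are finite, simple, undirected and connected. A connected graph with $n$ vertices and $m$ edges is a tree, unicyclic, bicyclic, tricyclic, tetracyclic graph if $m=n-1,n,n+1,n+2,n+3$ respectively. The variable sum exdeg index is $SEI_a(G)=\sum_{uv\in E(G)}(a^{d_u}+a^{d_v})$, $d_u$ the degree of $u$. $S_n$ is the star on $n$ vertices. The following graphs are obtained from $S_n$ by adding edges between leaves: $S_n^+$: add one edge; $B_1$: add two edges sharing a common leaf; $G_4$: join one leaf to three other leaves (exists for $n\ge5$); $H_4$: join one leaf to four other leaves (exists for $n\ge 6$). Each statement is for those $n$ for which the respective graph exists. *)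

From mathcomp Require Import all_boot all_order all_algebra.
Set Implicit Arguments. Unset Strict Implicit. Unset Printing Implicit Defensive.
Import Order.TTheory GRing.Theory Num.Theory.

Definition simple_graph n (e : rel 'I_n) : Prop :=
  (forall x, ~~ e x x) /\ (forall x y, e x y = e y x).

Definition connected_graph n (e : rel 'I_n) : Prop :=
  forall x y, connect e x y.

Definition nedges n (e : rel 'I_n) : nat :=
  #|[set p : 'I_n * 'I_n | (p.1 < p.2)%N && e p.1 p.2]|.

Definition deg n (e : rel 'I_n) (x : 'I_n) : nat := #|[set y | e x y]|.

Local Open Scope ring_scope.

Definition SEI (R : realFieldType) (a : R) n (e : rel 'I_n) : R :=
  \sum_(p : 'I_n * 'I_n | (p.1 < p.2)%N && e p.1 p.2)
     (a ^+ deg e p.1 + a ^+ deg e p.2).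

(* connected simple graph on n vertices with n - 1 + k edges
   (k = 0,1,2,3,4: tree, unicyclic, bicyclic, tricyclic, tetracyclic) *)
Definition in_class n (k : nat) (e : rel 'I_n) : Prop :=
  simple_graph e /\ connected_graph e /\ nedges e = (n - 1 + k)%N.

(* Star S_n with center 0 and leaves 1..n-1, plus the edges joining leaf 1
   to the leaves 2, ..., k+1. *)
Definition star_join (n : nat) (k : nat) : rel 'I_n :=
  fun x y => (x != y) &&
    [|| (val x == 0)%N, (val y == 0)%N,
        (val x == 1)%N && (2 <= val y <= k.+1)%N
      | (val y == 1)%N && (2 <= val x <= k.+1)%N].

Arguments star_join : clear implicits.
Definition star_graph (n : nat) : rel 'I_n := @star_join n 0.
Definition star_plus (n : nat) : rel 'I_n := @star_join n 1.
Definition B1_graph (n : nat) : rel 'I_n := @star_join n 2.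
Definition G4_graph (n : nat) : rel 'I_n := @star_join n 3.
Definition H4_graph (n : nat) : rel 'I_n := @star_join n 4.

Definition max_SEI_in_class (R : realFieldType) (a : R) n k (e0 : rel 'I_n) : Prop :=
  in_class k e0 /\ forall e : rel 'I_n, in_class k e -> SEI a e <= SEI a e0.
Arguments star_graph : clear implicits.
Arguments star_plus : clear implicits.
Arguments B1_graph : clear implicits.
Arguments G4_graph : clear implicits.
Arguments H4_graph : clear implicits.

From mathcomp Require Import all_boot all_order all_algebra.
From mathcomp Require Import ring lra zify.
Set Implicit Arguments. Unset Strict Implicit. Unset Printing Implicit Defensive.
Import Order.TTheory GRing.Theory Num.Theory.
Local Open Scope ring_scope.

(* Summing over edges, SEI_a(G) is the sum of g(d_v) = d_v a^d_v over the
   vertices, and g is convex for a > 1.  Induct on the order by deleting a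
   pendant vertex w: its neighbour has degree at most n - 2 in G - w, so by
   convexity the deletion loses at most g(1) + g(n - 1) - g(n - 2), which is
   exactly the growth of the star value from order n - 1 to n.  If G has no
   pendant vertex, all degrees lie in [2, n - 1] and their excesses over 2 sum
   to 2k - 2; by convexity the sum of the g(d_v) is largest when the excess is
   concentrated on as few vertices as possible, and this is at most the star
   value.  The few orders where the star graph does not exist yet are handled
   by explicit polynomial inequalities. *)

Section ConvexSequence.

Variables (R : realFieldType) (f : nat -> R).
Hypothesis f_convex : forall x, f x.+1 - f x <= f x.+2 - f x.+1.

Lemma convex_incr_le x y : (x <= y)%N -> f x.+1 - f x <= f y.+1 - f y.
Proof.
elim: y => [|y IH]; first by rewrite leqn0 => /eqP ->.
rewrite leq_eqVlt => /orP [/eqP -> // | /IH]; have := f_convex y; lra.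
Qed.

Lemma convex_exchange x y t : (x <= y)%N -> f (x + t) + f y <= f x + f (y + t).
Proof.
move=> le_xy; elim: t => [|t IH]; first by rewrite !addn0; lra.
have := convex_incr_le (_ : x + t <= y + t)%N; rewrite leq_add2r !addnS.
by move/(_ le_xy); lra.
Qed.

Lemma convex_incr_sum x y s :
  (x <= y)%N -> s%:R * (f x.+1 - f x) <= f (y + s)%N - f y.
Proof.
move=> le_xy; elim: s => [|s IH]; first by rewrite addn0 mul0r; lra.
have := convex_incr_le (leq_trans le_xy (leq_addr s y)).
rewrite addnS mulrSr; lra.
Qed.

Hypothesis f0 : f 0%N = 0.

(* Greedy filling: moving mass from a smaller to a larger argument does not
   decrease a convex sum, so the sum is dominated by [q] full buckets of size
   [C] plus one remainder bucket. *)
Lemma convex_sum_capped (I : Type) (s : seq I) (P : pred I) (z : I -> nat) C :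
  (forall i, P i -> z i <= C)%N ->
  exists q r, [/\ (r <= C)%N, (\sum_(i <- s | P i) z i = q * C + r)%N &
     \sum_(i <- s | P i) f (z i) <= q%:R * f C + f r].
Proof.
move=> zC; elim: s => [|i s [q [r [rC Es Ef]]]].
  by exists 0%N, 0%N; rewrite !big_nil mul0r f0 add0r.
rewrite !big_cons; case: ifP => [Pi|_]; last by exists q, r.
have ziC := zC i Pi.
have [le_rzC|lt_Crz] := leqP (r + z i) C.
  exists q, (r + z i)%N; split => //; first by rewrite Es; lia.
  have := convex_exchange (z i) (leq0n r); rewrite add0n f0; lra.
exists q.+1, (r + z i - C)%N; split; [lia | by rewrite Es; lia |].
have := convex_exchange (C - r) (_ : r + z i - C <= r)%N.
rewrite (_ : r + z i - C + (C - r) = z i)%N; last by lia.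
rewrite (_ : r + (C - r) = C)%N; last by lia.
by rewrite mulrSr; move/(_ ltac:(lia)); lra.
Qed.

(* With [j = k - 1] and [m = n - 3] this compares the concentrated excesses of
   a leafless graph with those of [star_join n k], whose [m - j] extra leaves
   each lose [D] against a vertex of degree 2. *)
Lemma convex_capped_le D j m q r :
  D <= f 1%N -> (j <= m)%N -> (r <= m)%N -> (q * m + r = 2 * j)%N ->
  q%:R * f m + f r + (m - j)%:R * D <= f m + f j.
Proof.
move=> D_le le_jm le_rm Eqr.
have mjD : (m - j)%:R * D <= (m - j)%:R * f 1%N by apply: ler_wpM2l.
have [m0|m_gt0] := posnP m.
  subst m; have -> : j = 0%N by lia.
  have -> : r = 0%N by lia.
  by rewrite subnn f0 mulr0 mul0r !addr0.
case: q Eqr => [|[|[|q]]] Eqr; last by nia.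
- have := convex_exchange j (_ : j <= m - j)%N.
  rewrite (_ : j + j = r)%N; last by lia.
  rewrite subnK // => /(_ ltac:(lia)).
  have := convex_incr_sum (m - j) (leqnn 0); rewrite add0n f0; lra.
- have := convex_incr_sum (m - j) (leq0n r).
  rewrite (_ : r + (m - j) = j)%N; last by lia.
  by rewrite f0; lra.
- have -> : r = 0%N by lia.
  have -> : j = m by lia.
  by rewrite subnn f0; lra.
Qed.

End ConvexSequence.

Section SEIWeight.

Variables (R : realFieldType) (a : R).
Hypothesis a_gt1 : 1 < a.

Definition sei_weight (d : nat) : R := d%:R * a ^+ d.

Lemma sei_weight0 : sei_weight 0 = 0.
Proof. by rewrite /sei_weight mul0r. Qed.

Lemma sei_weight_convex d :
  sei_weight d.+1 - sei_weight d <= sei_weight d.+2 - sei_weight d.+1.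
Proof.
rewrite -subr_ge0 /sei_weight !exprS.
have -> : d.+2%:R * (a * (a * a ^+ d)) - d.+1%:R * (a * a ^+ d) -
    (d.+1%:R * (a * a ^+ d) - d%:R * a ^+ d) =
    a ^+ d * (d%:R * (a - 1) ^+ 2 + 2 * a * (a - 1)) by rewrite !mulrSr; ring.
have a_ge0 : 0 <= a := le_trans ler01 (ltW a_gt1).
apply: mulr_ge0; first exact: exprn_ge0.
by rewrite addr_ge0 ?mulr_ge0 ?sqr_ge0 // subr_ge0 ltW.
Qed.

Definition sei_excess (z : nat) : R := sei_weight z.+2 - sei_weight 2.

Lemma sei_excess0 : sei_excess 0 = 0.
Proof. exact: subrr. Qed.

Lemma sei_excess_convex z :
  sei_excess z.+1 - sei_excess z <= sei_excess z.+2 - sei_excess z.+1.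
Proof. by rewrite /sei_excess; have := sei_weight_convex z.+2; lra. Qed.

Definition star_value (k n : nat) : R :=
  sei_weight n.-1 + sei_weight k.+1 + k%:R * sei_weight 2 + (n - k.+2)%:R * sei_weight 1.

Lemma star_value_step k n : (k.+2 < n)%N ->
  star_value k n.-1 + sei_weight 1 + (sei_weight n.-1 - sei_weight n.-2) =
  star_value k n.
Proof.
move=> lt_kn; have [s ->] : exists s, n = (s + k.+3)%N.
  by exists (n - k.+3)%N; rewrite subnK.
rewrite /star_value !addnS /= !subSS addnK subSn ?leq_addl // addnK mulrSr; lra.
Qed.

Lemma star_value_excess j m : (j <= m)%N ->
  star_value j.+1 m.+3 = m.+3%:R * sei_weight 2 + sei_excess m + sei_excess j
                         - (m - j)%:R * (sei_weight 2 - sei_weight 1).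
Proof.
move=> le_jm; rewrite /star_value /sei_excess subSS.
have -> : m.+3%:R = (m - j)%:R + j.+1%:R + 2%:R :> R.
  by rewrite -!natrD; congr _%:R; lia.
ring.
Qed.

Lemma leafless_le_star_value k n q r :
  (1 <= k)%N -> (k.+2 <= n)%N -> (r <= n - 3)%N -> (q * (n - 3) + r = 2 * k - 2)%N ->
  n%:R * sei_weight 2 + q%:R * sei_excess (n - 3) + sei_excess r <= star_value k n.
Proof.
case: k => // j _; case: n => [|[|[|m]]] //; rewrite !ltnS => le_jm.
rewrite mulnS add2n !subSS !subn0 => le_rm Eqr.
rewrite star_value_excess //.
have D_le : sei_weight 2 - sei_weight 1 <= sei_excess 1.
  by rewrite /sei_excess; have := sei_weight_convex 1; lra.
have := convex_capped_le sei_excess_convex sei_excess0 D_le le_jm le_rm Eqr.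
lra.
Qed.

End SEIWeight.

Section InducedSubgraph.

Variables (T : finType) (e : rel T).

Definition deg_in (S : {set T}) (v : T) : nat := #|[set y in S | e v y]|.

Definition cut_connected (S : {set T}) : Prop :=
  forall A : {set T}, A \subset S -> A != set0 -> A != S ->
    exists x y, [/\ x \in A, y \in S :\: A & e x y].

(* The subgraph induced on [S] is connected and, by the handshake lemma, has
   [#|S| - 1 + k] edges. *)
Definition induced_class (k : nat) (S : {set T}) : Prop :=
  cut_connected S /\ (\sum_(v in S) deg_in S v = 2 * (#|S| - 1 + k))%N.

Lemma deg_in_setD1 (S : {set T}) w v :
  deg_in S v = (deg_in (S :\ w) v + ((w \in S) && e v w))%N.
Proof.
rewrite /deg_in; case: (boolP (_ && _)) => [/andP [wS evw] | Nevw].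
  have -> : [set y in S | e v y] = w |: [set y in S :\ w | e v y].
    by apply/setP => y; rewrite !inE; case: eqVneq => // ->; rewrite wS evw.
  by rewrite cardsU1 !inE eqxx addnC.
rewrite addn0; apply: eq_card => y; rewrite !inE.
by case: eqVneq => // ->; rewrite (negbTE Nevw).
Qed.

Lemma connected_cut_connected :
  symmetric e -> (forall x y, connect e x y) -> cut_connected [set: T].
Proof.
move=> e_sym conn A _ /set0Pn [x xA] AT.
have /subsetPn [y _ yA] : ~~ ([set: T] \subset A) by rewrite subTset.
case: (boolP [exists x in A, exists y in ~: A, e x y]).
  move=> /exists_inP [x' x'A /exists_inP [y' y'A ex'y']].
  by exists x', y'; move: y'A; rewrite !inE => ->.
move=> no_cut; have clA : closed e A.
  move=> u v euv; apply/idP/idP => [uA|vA]; apply/negPn/negP => nA;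
    move/negP: no_cut; apply; apply/exists_inP.
  - by exists u => //; apply/exists_inP; exists v; rewrite ?inE.
  - by exists v => //; apply/exists_inP; exists u; rewrite ?inE // e_sym.
by move: yA; rewrite -(closed_connect clA (conn x y)) xA.
Qed.

Hypotheses (e_irr : irreflexive e) (e_sym : symmetric e).

Lemma deg_in_le (S : {set T}) v : v \in S -> (deg_in S v <= #|S| - 1)%N.
Proof.
move=> vS; rewrite (cardsD1 v S) vS add1n subn1 /=.
apply/subset_leq_card/subsetP => y; rewrite !inE => /andP [-> evy].
by rewrite andbT; apply: contraTneq evy => ->; rewrite e_irr.
Qed.

Lemma sum_deg_in_le (S : {set T}) : (\sum_(v in S) deg_in S v <= #|S| * (#|S| - 1))%N.
Proof. by rewrite -sum_nat_const; apply: leq_sum => v; apply: deg_in_le. Qed.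

Lemma cut_connected_deg_gt0 (S : {set T}) v :
  cut_connected S -> (1 < #|S|)%N -> v \in S -> (0 < deg_in S v)%N.
Proof.
move=> conS S_gt1 vS.
have [x [y [/set1P -> yS evy]]] :
    exists x y, [/\ x \in [set v], y \in S :\: [set v] & e x y].
  apply: conS; first by rewrite sub1set.
    by apply/set0Pn; exists v; rewrite inE.
  by apply: contraTneq S_gt1 => <-; rewrite cards1.
by apply/card_gt0P; exists y; rewrite !inE evy andbT; case/setDP: yS.
Qed.

Section Leaf.

Variables (S : {set T}) (w u : T).
Hypotheses (wS : w \in S) (Nw : [set y in S | e w y] = [set u]).

Lemma leaf_adj v : v \in S -> e v w = (v == u).
Proof. by move=> vS; rewrite e_sym -in_set1 -Nw inE vS. Qed.

Lemma leaf_nbr_in : u \in S :\ w.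
Proof.
have : u \in [set y in S | e w y] by rewrite Nw set11.
rewrite !inE => /andP [-> ewu]; rewrite andbT.
by apply: contraTneq ewu => ->; rewrite e_irr.
Qed.

Lemma big_deg_in_leaf (V : Type) (idx : V) (op : Monoid.com_law idx) (F : nat -> V) :
  \big[op/idx]_(v in S) F (deg_in S v) =
  op (op (F 1%N) (F (deg_in (S :\ w) u).+1))
     (\big[op/idx]_(v in S :\ w :\ u) F (deg_in (S :\ w) v)).
Proof.
have uS' := leaf_nbr_in; have uS : u \in S by case/setD1P: uS'.
rewrite (big_setD1 w wS) (big_setD1 u uS') Monoid.mulmA.
have -> : deg_in S w = 1%N by rewrite /deg_in Nw cards1.
rewrite [deg_in S u](deg_in_setD1 _ w) wS (leaf_adj uS) eqxx addn1.
congr (op _ _); apply: eq_bigr => v; rewrite !inE => /and3P [vu _ vS].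
by rewrite (deg_in_setD1 _ w) wS (leaf_adj vS) (negbTE vu) addn0.
Qed.

(* If the neighbour [u] of the leaf lies in [A], add the leaf to [A] before
   cutting [S]; otherwise the cut edge of [A] in [S] cannot end at the leaf. *)
Lemma cut_connected_leaf_del : cut_connected S -> cut_connected (S :\ w).
Proof.
move=> conS A sAS' A0 AS'.
have sAS : A \subset S := subset_trans sAS' (subsetDl S [set w]).
have wA : w \notin A by apply/negP => /(subsetP sAS'); rewrite !inE eqxx.
have [uA|uA] := boolP (u \in A).
  have [x [y [xwA ySwA exy]]] :
      exists x y, [/\ x \in w |: A, y \in S :\: (w |: A) & e x y].
    apply: conS; first by rewrite subUset sub1set wS sAS.
      by apply/set0Pn; exists w; rewrite !inE eqxx.
    by apply: contraNneq AS' => wAS; rewrite -wAS setU1K.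
  move: ySwA; rewrite !inE negb_or => /andP [/andP [yw yA] yS].
  case/setU1P: xwA => [xw|xA].
    by move: exy yA; rewrite xw e_sym (leaf_adj yS) => /eqP ->; rewrite uA.
  by exists x, y; rewrite !inE yw yA yS.
have AS : A != S by apply: contraNneq wA => ->.
have [x [y [xA ySA exy]]] := conS A sAS A0 AS.
move: ySA; rewrite !inE => /andP [yA yS].
have yw : y != w.
  apply: contraNneq uA => yw; move: exy; rewrite yw.
  by rewrite (leaf_adj (subsetP sAS x xA)) => /eqP <-.
by exists x, y; rewrite !inE yw yA yS.
Qed.

Lemma induced_class_leaf_del k : induced_class k S -> induced_class k (S :\ w).
Proof.
case=> conS sumS; split; first exact: cut_connected_leaf_del.
have uS' := leaf_nbr_in.
move: sumS; rewrite (big_deg_in_leaf _ id) (big_setD1 u uS') /=.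
rewrite (cardsD1 w S) wS (cardsD1 u (S :\ w)) uS'.
move=> sumS; lia.
Qed.

End Leaf.

End InducedSubgraph.

Section OrdinalGraph.

Variables (n : nat) (e : rel 'I_n).

Lemma deg_in_setT v : deg_in e [set: 'I_n] v = deg e v.
Proof. by apply: eq_card => y; rewrite !inE. Qed.

Hypotheses (e_irr : irreflexive e) (e_sym : symmetric e).

Lemma sum_edge_ends (V : nmodType) (F : 'I_n -> V) :
  \sum_(p : 'I_n * 'I_n | (p.1 < p.2)%N && e p.1 p.2) (F p.1 + F p.2) =
  \sum_v F v *+ deg e v.
Proof.
have -> : \sum_v F v *+ deg e v = \sum_(p : 'I_n * 'I_n | e p.1 p.2) F p.1.
  rewrite -(pair_big_dep xpredT (fun v y => e v y) (fun v _ => F v)).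
  apply: eq_bigr => v _; rewrite -sumr_const.
  by apply: eq_bigl => y; rewrite inE.
have swap_inj : injective (fun p : 'I_n * 'I_n => (p.2, p.1)).
  by move=> [? ?] [? ?] [-> ->].
rewrite big_split /= [X in _ + X = _](reindex_inj swap_inj) /=.
rewrite [RHS](bigID (fun p : 'I_n * 'I_n => (p.1 < p.2)%N)) /=.
congr (_ + _); apply: eq_bigl => -[x y] /=; first by rewrite andbC.
by case: ltngtP => [|_|/val_inj ->]; rewrite ?e_irr ?andbF ?andbT // e_sym.
Qed.

Lemma SEI_vertex_sum (R : realFieldType) (a : R) :
  SEI a e = \sum_v sei_weight a (deg e v).
Proof.
rewrite /SEI (sum_edge_ends (fun v => a ^+ deg e v)).
by apply: eq_bigr => v _; rewrite /sei_weight mulr_natl.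
Qed.

Lemma handshake : (\sum_v deg e v = 2 * nedges e)%N.
Proof.
have edge_sum : (\sum_(p : 'I_n * 'I_n | (p.1 < p.2)%N && e p.1 p.2) (1 + 1) = nedges e * 2)%N.
  by rewrite /nedges -sum_nat_const; apply: eq_bigl => p; rewrite inE.
rewrite mulnC -edge_sum (sum_edge_ends (fun _ => 1%N)).
by apply: eq_bigr => v _; rewrite /= -[LHS]natn.
Qed.

Lemma in_class_induced k :
  connected_graph e -> nedges e = (n - 1 + k)%N -> induced_class e k [set: 'I_n].
Proof.
move=> conn ne; split; first exact: connected_cut_connected.
rewrite cardsT card_ord -ne -handshake.
by apply: eq_big => [v|v _]; rewrite ?inE ?deg_in_setT.
Qed.

End OrdinalGraph.

Section ClassBound.

Variables (R : realFieldType) (a : R) (k n0 : nat) (B : nat -> R).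
Hypothesis a_gt1 : 1 < a.

Section Leafless.

Variables (T : finType) (e : rel T).
Hypothesis e_irr : irreflexive e.

Lemma sum_sei_weight_small (S : {set T}) :
  (#|S| <= 1)%N -> \sum_(v in S) sei_weight a (deg_in e S v) = 0.
Proof.
move=> S_le1; apply: big1 => v vS.
have := deg_in_le e_irr vS; rewrite (eqP (_ : #|S| - 1 == 0)%N) ?subn_eq0 //.
by rewrite leqn0 => /eqP ->; rewrite sei_weight0.
Qed.

(* [q] full and one partial bucket of size [#|S| - 3] hold the excesses
   [deg - 2], which sum to [2 k - 2]. *)
Lemma leafless_sum_le (S : {set T}) :
  (1 < #|S|)%N -> induced_class e k S -> (forall v, v \in S -> deg_in e S v != 1%N) ->
  exists q r, [/\ (r <= #|S| - 3)%N, (q * (#|S| - 3) + r = 2 * k - 2)%N, (1 <= k)%N &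
    \sum_(v in S) sei_weight a (deg_in e S v)
      <= #|S|%:R * sei_weight a 2 + q%:R * sei_excess a (#|S| - 3) + sei_excess a r].
Proof.
move=> S_gt1 [conS sumS] noleaf.
have deg_ge2 v : v \in S -> (2 <= deg_in e S v)%N.
  move=> vS; have := cut_connected_deg_gt0 conS S_gt1 vS.
  by have := noleaf v vS; case: (deg_in e S v) => [|[|]].
have excess_le v : v \in S -> (deg_in e S v - 2 <= #|S| - 3)%N.
  by move=> vS; have := deg_in_le e_irr vS; lia.
have [q [r [le_r sum_excess sum_le]]] := convex_sum_capped
  (sei_excess_convex a_gt1) (sei_excess0 a) (index_enum T) excess_le.
have sumS2 : (\sum_(v in S) (deg_in e S v - 2) + 2 * #|S| = \sum_(v in S) deg_in e S v)%N.
  rewrite mulnC -sum_nat_const -big_split /=.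
  by apply: eq_bigr => v vS; rewrite subnK ?deg_ge2.
have sum_weight : \sum_(v in S) sei_weight a (deg_in e S v) =
    #|S|%:R * sei_weight a 2 + \sum_(v in S) sei_excess a (deg_in e S v - 2).
  rewrite mulr_natl -sumr_const -big_split /=; apply: eq_bigr => v vS.
  by rewrite /sei_excess -[(_ - 2).+2]addn2 subnK ?deg_ge2 // addrC subrK.
exists q, r; split => //; [lia | lia |].
by rewrite sum_weight -addrA lerD2l.
Qed.

End Leafless.

(* No graph of order [n0 - 1] has [n0 - 2 + k] edges. *)
Hypothesis B_vacuous : (n0 <= 1)%N \/ (n0.-1 * n0.-2 < 2 * (n0.-2 + k))%N.
Hypothesis B_step : forall n, (n0 < n)%N ->
  B n.-1 + sei_weight a 1 + (sei_weight a n.-1 - sei_weight a n.-2) <= B n.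
Hypothesis B_ge0 : forall n, (n0 <= n <= 1)%N -> 0 <= B n.
Hypothesis B_leafless : forall n q r, (n0 <= n)%N -> (1 <= k)%N ->
  (r <= n - 3)%N -> (q * (n - 3) + r = 2 * k - 2)%N ->
  n%:R * sei_weight a 2 + q%:R * sei_excess a (n - 3) + sei_excess a r <= B n.

(* Induction on [#|S|], deleting a leaf whenever there is one: the leaf's
   neighbour has degree at most [#|S| - 2] in [S :\ w], so by convexity its
   degree increase costs at most the increase of a vertex of full degree. *)
Lemma induced_class_sum_le (T : finType) (e : rel T) :
  irreflexive e -> symmetric e ->
  forall S : {set T}, (n0 <= #|S|)%N -> induced_class e k S ->
    \sum_(v in S) sei_weight a (deg_in e S v) <= B #|S|.
Proof.
move=> e_irr e_sym S; have [n le_Sn] := ubnP #|S|.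
elim: n S le_Sn => // n IH S /ltnSE le_Sn le_n0 classS.
have [S_le1|S_gt1] := leqP #|S| 1.
  by rewrite sum_sei_weight_small // B_ge0 ?le_n0.
have [/exists_inP [w wS /cards1P [u Nw]] | noleaf] :=
  boolP [exists w in S, deg_in e S w == 1%N]; last first.
  have [|q [r [le_r Eqr k_ge1 sum_le]]] := leafless_sum_le e_irr S_gt1 classS.
    move=> v vS; apply: contraNneq noleaf => degv.
    by apply/exists_inP; exists v => //; apply/eqP.
  exact: le_trans sum_le (B_leafless le_n0 k_ge1 le_r Eqr).
have uS' := leaf_nbr_in e_irr Nw.
have classSw := induced_class_leaf_del e_irr e_sym wS Nw classS.
have cardS : #|S| = #|S :\ w|.+1 by rewrite (cardsD1 w S) wS.
have [s cardSw] : exists s, #|S :\ w| = s.+1.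
  by exists #|S :\ w|.-1; rewrite prednK //; apply/card_gt0P; exists u.
have [lt_Sw_n0|le_n0_Sw] := ltnP #|S :\ w| n0.
  exfalso; have := sum_deg_in_le e_irr (S :\ w); case: classSw => _ ->.
  have En0 : n0 = s.+2 by move: le_n0 lt_Sw_n0; rewrite cardS cardSw; lia.
  by move: B_vacuous; rewrite cardSw En0 subSS subn0 /=; lia.
have IHw := IH _ (_ : #|S :\ w| < n)%N le_n0_Sw classSw.
have le_us : (deg_in e (S :\ w) u <= s)%N.
  by have := deg_in_le e_irr uS'; rewrite cardSw subn1.
have incr_u := convex_incr_le (sei_weight_convex a_gt1) le_us.
have step : B s.+1 + sei_weight a 1 + (sei_weight a s.+1 - sei_weight a s) <= B s.+2.
  by apply: (@B_step s.+2); rewrite -cardSw.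
move: IHw; rewrite -cardS => /(_ le_Sn); rewrite (big_setD1 u uS') /= cardSw.
rewrite cardS cardSw (big_deg_in_leaf e_irr e_sym wS Nw) /=; lra.
Qed.

Lemma SEI_le_bound n (e : rel 'I_n) :
  (n0 <= n)%N -> in_class k e -> SEI a e <= B n.
Proof.
move=> le_n0 [[e_irr e_sym] [conn ne]].
have {}e_irr : irreflexive e := fun x => negbTE (e_irr x).
have := induced_class_sum_le e_irr e_sym (_ : n0 <= #|[set: 'I_n]|)%N
  (in_class_induced e_irr e_sym conn ne).
rewrite cardsT card_ord SEI_vertex_sum // => /(_ le_n0).
by under eq_bigl do rewrite inE; under eq_bigr do rewrite deg_in_setT.
Qed.

End ClassBound.

Section StarJoin.

Variables (n k : nat).

Lemma card_ord_lt m : (m <= n)%N -> #|[set y : 'I_n | (y < m)%N]| = m.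
Proof.
move=> le_mn; have widen_inj : injective (widen_ord le_mn).
  by move=> i j /(congr1 val) /= /val_inj.
rewrite -[RHS]card_ord -(card_imset _ widen_inj); apply: eq_card => y; rewrite inE.
apply/idP/imsetP => [lt_ym|[i _ ->]]; last exact: (ltn_ord i).
by exists (Ordinal lt_ym); rewrite ?inE //; apply: val_inj.
Qed.

Lemma card_ord_lt_setD1 m (v : 'I_n) : (m <= n)%N ->
  #|[set y : 'I_n | (y != v) && (y < m)%N]| = (m - (v < m))%N.
Proof.
move=> le_mn; have -> : #|[set y : 'I_n | (y != v) && (y < m)%N]| =
    #|[set y : 'I_n | (y < m)%N] :\ v| by apply: eq_card => y; rewrite !inE.
by have := cardsD1 v [set y : 'I_n | (y < m)%N]; rewrite card_ord_lt // inE; lia.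
Qed.

Definition star_join_deg (i : nat) : nat :=
  if i == 0%N then n.-1 else if i == 1%N then k.+1 else if (i <= k.+1)%N then 2 else 1.

Lemma star_join_simple : simple_graph (star_join n k).
Proof.
split => [x|x y]; first by rewrite /star_join eqxx.
by rewrite /star_join -!val_eqE /=; lia.
Qed.

Lemma star_join_connected : (0 < n)%N -> connected_graph (star_join n k).
Proof.
move=> n_gt0 x y; pose c := Ordinal n_gt0.
have adj_c z : z != c -> star_join n k z c && star_join n k c z.
  by move=> zc; rewrite /star_join [c == z]eq_sym zc /= !orbT.
have c_conn z : connect (star_join n k) z c && connect (star_join n k) c z.
  have [->|zc] := eqVneq z c; first by rewrite connect0.
  by case/andP: (adj_c z zc) => ??; rewrite !connect1.
have /andP [xc _] := c_conn x; have /andP [_ cy] := c_conn y.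
exact: connect_trans xc cy.
Qed.

Hypothesis le_kn : (k.+2 <= n)%N.

(* Every neighbourhood is an initial segment of ['I_n] with [v] removed. *)
Lemma deg_star_join v : deg (star_join n k) v = star_join_deg v.
Proof.
have deg_eq m : (m <= n)%N ->
    (forall y : 'I_n, star_join n k v y = (val y != val v) && (y < m)%N) ->
  deg (star_join n k) v = (m - (v < m))%N.
  move=> le_mn nbr; rewrite -card_ord_lt_setD1 //.
  by apply: eq_card => y; rewrite !inE nbr.
have v_lt := ltn_ord v; rewrite /star_join_deg.
case: ifP => [/eqP v0|/negbT v_ne0]; last case: ifP => [/eqP v1|/negbT v_ne1].
- rewrite (deg_eq n) => [||y]; [lia | lia |].
  by rewrite /star_join -val_eqE /=; have := ltn_ord y; lia.
- rewrite (deg_eq k.+2) => [||y]; [lia | lia |].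
  by rewrite /star_join -val_eqE /=; have := ltn_ord y; lia.
case: ifP => [le_vk|/negbT gt_vk].
- rewrite (deg_eq 2%N) => [||y]; [lia | lia |].
  by rewrite /star_join -val_eqE /=; lia.
- rewrite (deg_eq 1%N) => [||y]; [lia | lia |].
  by rewrite /star_join -val_eqE /=; lia.
Qed.

Lemma sum_star_join_deg (V : nmodType) (F : nat -> V) :
  \sum_(i < n) F (star_join_deg i) =
  F n.-1 + F k.+1 + F 2%N *+ k + F 1%N *+ (n - k.+2).
Proof.
have sum_mid : \sum_(2 <= i < k.+2) F (star_join_deg i) = F 2%N *+ k.
  rewrite (eq_big_nat _ _ (F2 := fun=> F 2%N)) ?sumr_const_nat ?subSS ?subn0 // => i ?.
  by congr F; rewrite /star_join_deg; do !case: ifP; lia.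
have sum_tail : \sum_(k.+2 <= i < n) F (star_join_deg i) = F 1%N *+ (n - k.+2).
  rewrite (eq_big_nat _ _ (F2 := fun=> F 1%N)) ?sumr_const_nat // => i ?.
  by congr F; rewrite /star_join_deg; do !case: ifP; lia.
rewrite -(big_mkord xpredT (F \o star_join_deg)) big_ltn ?(leq_trans _ le_kn) //.
rewrite big_ltn ?(leq_trans _ le_kn) // (@big_cat_nat _ _ _ k.+2) //.
by rewrite sum_mid sum_tail !addrA.
Qed.

Lemma star_join_nedges : nedges (star_join n k) = (n - 1 + k)%N.
Proof.
have [irr sym] := star_join_simple.
have := handshake (fun x => negbTE (irr x)) sym.
under eq_bigr do rewrite deg_star_join.
rewrite (sum_star_join_deg id) -[2%N *+ _]mulr_natr -[1%N *+ _]mulr_natr !natn !natrDE !natrME.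
lia.
Qed.

Lemma star_join_in_class : in_class k (star_join n k).
Proof.
split; first exact: star_join_simple.
by split; [apply: star_join_connected; lia | exact: star_join_nedges].
Qed.

Lemma SEI_star_join (R : realFieldType) (a : R) :
  SEI a (star_join n k) = star_value a k n.
Proof.
have [irr sym] := star_join_simple.
rewrite (SEI_vertex_sum (fun x => negbTE (irr x)) sym).
under eq_bigr do rewrite deg_star_join.
by rewrite sum_star_join_deg /star_value !mulr_natl.
Qed.

End StarJoin.

(* Upper bound for [SEI_a] on the class [k] at order [n]: the value of
   [star_join n k] wherever that graph exists, and otherwise the value of a
   single vertex, of [K_4], and of the degree sequence (4,4,4,2,2), which
   dominates every graph of order 5 with 8 edges. *)
Definition sei_bound (R : realFieldType) (a : R) (k n : nat) : R :=
  match k, n with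
  | 0, 1 => 0
  | 3, 4 => 4%:R * sei_weight a 3
  | 4, 5 => 3%:R * sei_weight a 4 + 2%:R * sei_weight a 2
  | _, _ => star_value a k n
  end.

(* The least order of a connected graph with [n - 1 + k] edges, for [k <= 4]. *)
Definition min_order (k : nat) : nat :=
  match k with 0 => 1 | 1 => 3 | 2 | 3 => 4 | _ => 5 end.

Lemma min_order_le k : (k <= 4)%N -> (min_order k <= k.+2)%N.
Proof. by case: k => [|[|[|[|[|]]]]]. Qed.

Lemma min_order_vacuous k : (k <= 4)%N ->
  (min_order k <= 1)%N \/ ((min_order k).-1 * (min_order k).-2 < 2 * ((min_order k).-2 + k))%N.
Proof. by case: k => [|[|[|[|[|]]]]] // _; [left | right..]. Qed.

Section SEIBound.

Variables (R : realFieldType) (a : R).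
Hypothesis a_gt1 : 1 < a.

Local Notation g := (sei_weight a).

Lemma sei_bound_star k n : (k.+2 <= n)%N -> sei_bound a k n = star_value a k n.
Proof. by case: k n => [|[|[|[|[|k]]]]] [|[|[|[|[|[|n]]]]]]. Qed.

Lemma sei_bound_ge0 k n : (min_order k <= n <= 1)%N -> 0 <= sei_bound a k n.
Proof.
case/andP; case: k => [|[|[|[|[|k]]]]]; case: n => [|[|n]] //= _ _; exact: lexx.
Qed.

Lemma sei_bound_step_k3 : sei_bound a 3 4 + g 1 + (g 4 - g 3) <= sei_bound a 3 5.
Proof.
rewrite /sei_bound /star_value /= subnn -subr_ge0.
rewrite (_ : _ - _ = a * ((a - 1) ^+ 2 * (4%:R * a - 1))).
  by rewrite !mulr_ge0 //; have := a_gt1; lra.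
by rewrite /sei_weight; ring.
Qed.

Lemma sei_bound_step_k4 : sei_bound a 4 5 + g 1 + (g 5 - g 4) <= sei_bound a 4 6.
Proof.
rewrite /sei_bound /star_value /= subnn -subr_ge0.
rewrite (_ : _ - _ = a * ((a - 1) ^+ 2 * (5%:R * a ^+ 2 + 2%:R * a - 1))).
  by rewrite !mulr_ge0 //; have := a_gt1; nra.
by rewrite /sei_weight; ring.
Qed.

Lemma sei_bound_step k n : (k <= 4)%N -> (min_order k < n)%N ->
  sei_bound a k n.-1 + g 1 + (g n.-1 - g n.-2) <= sei_bound a k n.
Proof.
move=> le_k4 lt_n; have [lt_kn|le_nk] := ltnP k.+2 n.
  by rewrite !sei_bound_star ?star_value_step //; lia.
have [[-> ->]|[[-> ->]|[-> ->]]] : (k = 0 /\ n = 2 \/ k = 3 /\ n = 5 \/ k = 4 /\ n = 6)%N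
  by move: lt_n le_nk; case: k le_k4 => [|[|[|[|[|]]]]] //= _; lia.
- by rewrite /sei_bound /star_value /= subnn mul0r sei_weight0; lra.
- exact: sei_bound_step_k3.
- exact: sei_bound_step_k4.
Qed.

Lemma sei_bound_leafless k n q r : (k <= 4)%N -> (min_order k <= n)%N -> (1 <= k)%N ->
  (r <= n - 3)%N -> (q * (n - 3) + r = 2 * k - 2)%N ->
  n%:R * g 2 + q%:R * sei_excess a (n - 3) + sei_excess a r <= sei_bound a k n.
Proof.
move=> le_k4 le_n k_ge1 le_r Eqr; have [le_kn|lt_nk] := leqP k.+2 n.
  by rewrite sei_bound_star // leafless_le_star_value.
have [[Ek En]|[Ek En]] : (k = 3 /\ n = 4 \/ k = 4 /\ n = 5)%N
  by move: le_n lt_nk k_ge1; case: k {Eqr} le_k4 => [|[|[|[|[|]]]]] //= _; lia.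
  rewrite Ek En (_ : 4 - 3 = 1)%N // in le_r Eqr *.
  have [[-> ->]|[-> ->]] : (q = 4 /\ r = 0 \/ q = 3 /\ r = 1)%N by lia.
    by rewrite /sei_bound /sei_excess; lra.
  by rewrite /sei_bound /sei_excess; lra.
rewrite Ek En (_ : 5 - 3 = 2)%N // in le_r Eqr *.
have [[-> ->]|[-> ->]] : (q = 3 /\ r = 0 \/ q = 2 /\ r = 2)%N by lia.
  by rewrite /sei_bound /sei_excess; lra.
by rewrite /sei_bound /sei_excess; lra.
Qed.

Lemma star_join_max k n : (k <= 4)%N -> (k.+2 <= n)%N ->
  max_SEI_in_class a k (star_join n k).
Proof.
move=> le_k4 le_kn; split; first exact: star_join_in_class.
move=> e class_e; rewrite SEI_star_join // -sei_bound_star //.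
apply: (SEI_le_bound (k := k) (n0 := min_order k)) => //.
- exact: min_order_vacuous.
- by move=> m; apply: sei_bound_step.
- exact: sei_bound_ge0.
- by move=> m q r; apply: sei_bound_leafless.
- exact: leq_trans (min_order_le le_k4) le_kn.
Qed.

End SEIBound.

Lemma max_SEI_order1 (R : realFieldType) (a : R) : max_SEI_in_class a 0 (star_join 1 0).
Proof.
have no_pair (p : 'I_1 * 'I_1) : (p.1 < p.2)%N = false.
  by case: p => x y /=; rewrite (ord1 x) (ord1 y).
split.
  split; first exact: star_join_simple.
  split; first exact: star_join_connected.
  by apply/eqP; rewrite cards_eq0; apply/eqP/setP => p; rewrite !inE no_pair.
by move=> e _; rewrite /SEI !big_pred0 // => p; rewrite no_pair.
Qed.

Theorem theorem8 (R : realFieldType) (a : R) (ha : 1 < a) :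
  (forall n : nat, (1 <= n)%N -> max_SEI_in_class a 0 (star_graph n)) /\
  (forall n : nat, (3 <= n)%N -> max_SEI_in_class a 1 (star_plus n)) /\
  (forall n : nat, (4 <= n)%N -> max_SEI_in_class a 2 (B1_graph n)) /\
  (forall n : nat, (5 <= n)%N -> max_SEI_in_class a 3 (G4_graph n)) /\
  (forall n : nat, (6 <= n)%N -> max_SEI_in_class a 4 (H4_graph n)).
Proof.
split; first by case=> [|[|n]] // _; [exact: max_SEI_order1 | exact: star_join_max].
do 3 (split; first by move=> n le_n; apply: star_join_max).
by move=> n le_n; apply: star_join_max.
Qed.
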